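(* Let $G$ be a directed $st$-graph that does not contain a subgraph homeomorphic to the Wheatstone graph $W$, and let $C$ be a simple directed cycle in $G$. Then some edge $e$ of $C$ can be removed so that the resulting graph $G'=(V,E\setminus\{e\},s,t)$ satisfies $\mathrm{Path}_A(G')=\mathrm{Path}_A(G)$.
   Context: A directed $st$-graph $G=(V,E,s,t)$ is a finite directed graph with no self-loops and no parallel edges, with distinct source $s$ (no incoming edges) and sink $t$ (no outgoing edges), such that every vertex lies on some directed walk from $s$ to $t$. $\mathrm{Path}_A(G)$ is the set of acyclic (simple) directed paths from $s$ to $t$ in $G$. The Wheatstone graph $W$ has vertices $s,u,v,t$ and edges $s\to u$, $s\to v$, $u\to v$, $u\to t$, $v\to t$. $G$ contains a subgraph homeomorphic to $W$ if there are distinct vertices $s',u',v',t'$ of $G$ and directed paths $s'\leadsto u'$, $s'\leadsto v'$, $u'\leadsto v'$, $u'\leadsto t'$, $v'\leadsto t'$ that pairwise share no vertices other than common endpoints. *)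

(* A directed graph without parallel edges on a finite vertex
   type V is an edge relation e : rel V (e x y <-> there is an edge x -> y). *)
From mathcomp Require Import all_boot.
Set Implicit Arguments. Unset Strict Implicit. Unset Printing Implicit Defensive.

Section Defs.
Variable V : finType.

Definition st_graph (e : rel V) (s t : V) : Prop :=
  [/\ irreflexive e, s != t, (forall x, ~~ e x s), (forall x, ~~ e t x)
    & (forall v, connect e s v && connect e v t)].

Definition spath (e : rel V) (x y : V) (p : seq V) : bool :=
  [&& path e x p, last x p == y & uniq (x :: p)].

Definition PathA (e : rel V) (s t : V) : pred (seq V) :=
  fun p => spath e s t p.

Definition int_disjoint (x1 y1 : V) (p1 : seq V) (x2 y2 : V) (p2 : seq V) : Prop :=
  forall z, z \in x1 :: p1 -> z \in x2 :: p2 ->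
    (z \in [:: x1; y1]) && (z \in [:: x2; y2]).

Definition has_Wheatstone (e : rel V) : Prop :=
  exists (s' u' v' t' : V) (psu psv puv put pvt : seq V),
    [/\ uniq [:: s'; u'; v'; t'],
        [/\ spath e s' u' psu, spath e s' v' psv, spath e u' v' puv,
            spath e u' t' put & spath e v' t' pvt],
        [/\ int_disjoint s' u' psu s' v' psv,
            int_disjoint s' u' psu u' v' puv,
            int_disjoint s' u' psu u' t' put,
            int_disjoint s' u' psu v' t' pvt &
            int_disjoint s' v' psv u' v' puv],
        [/\ int_disjoint s' v' psv u' t' put,
            int_disjoint s' v' psv v' t' pvt,
            int_disjoint u' v' puv u' t' put &
            int_disjoint u' v' puv v' t' pvt]
      & int_disjoint u' t' put v' t' pvt].

Definition simple_cycle (e : rel V) (c : seq V) : bool :=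
  [&& c != [::], uniq c & cycle e c].

Definition del_edge (e : rel V) (a b : V) : rel V :=
  fun x y => e x y && ~~ ((x == a) && (y == b)).

End Defs.

From mathcomp Require Import all_boot zify.
From Stdlib Require Import Classical.
Set Implicit Arguments. Unset Strict Implicit. Unset Printing Implicit Defensive.

(* Say that x precedes y if some simple s-t path visits x strictly before y.
   If two simple s-t paths visited two common vertices in opposite orders, an
   extremal choice of such a crossing would exhibit a subdivided Wheatstone
   graph.  Hence, without a Wheatstone subgraph, precedes is transitive: the
   prefix of one path up to y followed by the suffix of another after y is
   again simple.  Deleting an edge a -> b changes Path_A only if a precedes b;
   if this held for every edge a -> next c a, transitivity around the cycle
   would give a precedes a. *)

Section Seq.
Variable T : eqType.
Implicit Types (w : seq T) (x y z : T).

Lemma mem_drop_uniq w i z : uniq w -> (z \in drop i w) = (z \in w) && (i <= index z w).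
Proof.
move=> Uw; case zw: (z \in w); last by apply: contraFF zw; apply: mem_drop.
move: (Uw); rewrite -{1}(cat_take_drop i w) cat_uniq => /and3P[_ /hasPn take_drop _].
rewrite /= leqNgt -(in_take i zw); move: zw; rewrite -{1}(cat_take_drop i w) mem_cat.
case: (boolP (z \in take i w)) => [zt _ | _ /= -> //].
by apply/negbTE; apply: contraTN zt; apply: take_drop.
Qed.

Lemma eq_index w x y : x \in w -> (index x w == index y w) = (x == y).
Proof.
move=> xw; apply/eqP/eqP => [E | -> //].
by rewrite -(nth_index x xw) E nth_index // -index_mem -E index_mem.
Qed.

Lemma index_ltn_mem w x y : index x w < index y w -> x \in w.
Proof. by rewrite -index_mem => /leq_trans; apply; rewrite index_size. Qed.

Lemma index_le_last x z p1 p2 : uniq (x :: p1 ++ p2) ->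
  (index z (x :: p1 ++ p2) <= index (last x p1) (x :: p1 ++ p2)) = (z \in x :: p1).
Proof.
rewrite -cat_cons cat_uniq => /andP[U1 _].
rewrite !index_cat mem_last index_last //.
case: ifP => [z1 | _]; first by rewrite -ltnS index_mem.
by apply/negbTE; rewrite -ltnNge ltn_addr.
Qed.

Lemma index_take w j z : z \in take j w -> index z (take j w) = index z w.
Proof. by move=> zt; rewrite -{2}(cat_take_drop j w) index_cat zt. Qed.

Definition subpath w x y := drop (index x w).+1 (take (index y w).+1 w).

Lemma cons_subpath w x y : x \in w -> index x w <= index y w ->
  x :: subpath w x y = drop (index x w) (take (index y w).+1 w).
Proof.
move=> xw xy; rewrite (drop_nth x) ?nth_take ?nth_index //.
by rewrite size_take; case: ifP => _; rewrite ?index_mem // ltnS.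
Qed.

Lemma mem_subpath w x y z : uniq w -> x \in w -> index x w <= index y w ->
  (z \in x :: subpath w x y) = (z \in w) && (index x w <= index z w <= index y w).
Proof.
move=> Uw xw xy; rewrite cons_subpath // mem_drop_uniq ?take_uniq //.
case zw: (z \in w); last by apply: contraFF zw => /andP[/mem_take].
rewrite in_take // ltnS; case: leqP => [zy | _]; last by rewrite andbF.
by rewrite index_take ?andbT // in_take.
Qed.
End Seq.

Lemma trans_next_refl (T : finType) (R : T -> T -> Prop) (c : seq T) a :
  (forall x y z, R x y -> R y z -> R x z) -> uniq c ->
  {in c, forall x, R x (next c x)} -> a \in c -> R a a.
Proof.
move=> Rtr Uc Rnext ac.
have iter_in k : iter k (next c) a \in c by elim: k => //= k IHk; rewrite mem_next.
have R_iter k : R a (iter k.+1 (next c) a).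
  elim: k => [|k IHk]; first exact: Rnext.
  exact: Rtr IHk (Rnext _ (iter_in k.+1)).
have /iter_findex fa : fconnect (next c) (next c a) a.
  by rewrite (fconnect_cycle (cycle_next Uc)) ?mem_next.
by move: (R_iter (findex (next c) (next c a) a)); rewrite iterSr fa.
Qed.

Section Subpath.
Variables (V : finType) (e : rel V).
Implicit Types (w : seq V) (x y : V).

Lemma subpath_spath w x y : sorted e w -> uniq w -> x \in w -> y \in w ->
  index x w <= index y w -> spath e x y (subpath w x y).
Proof.
move=> Sw Uw xw yw xy; have Ex := cons_subpath xw xy.
have size_q : size (subpath w x y) = index y w - index x w.
  by rewrite /subpath size_drop size_takel ?index_mem //; lia.
apply/and3P; split.
- by rewrite -[path _ _ _]/(sorted e (x :: _)) Ex drop_sorted ?take_sorted.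
- rewrite (last_nth x) Ex nth_drop nth_take size_q ?subnKC ?nth_index //; lia.
- by rewrite Ex drop_uniq ?take_uniq.
Qed.

Lemma wheatstone_of_paths (P R : seq V) a u v z :
  sorted e P -> sorted e R -> uniq P -> uniq R -> z \in P -> z \in R ->
  index a P < index u P -> index u P < index v P -> index v P < index z P ->
  index a R < index v R -> index v R < index u R -> index u R < index z R ->
  (forall x, x \in P -> x \in R -> index a R <= index x R <= index v R -> x \in [:: a; v]) ->
  (forall x, x \in P -> x \in R -> index u R <= index x R <= index z R -> x \in [:: u; z]) ->
  has_Wheatstone e.
Proof.
move=> SP SR UP UR zP zR au uv vz av vu uz arc_av arc_uz.
move: (index_ltn_mem au) (index_ltn_mem uv) (index_ltn_mem vz) => aP uP vP.
move: (index_ltn_mem av) (index_ltn_mem vu) (index_ltn_mem uz) => aR vR uR.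
have idx_av x : x \in P -> x \in R -> index a R <= index x R <= index v R ->
    (index x P == index a P) || (index x P == index v P).
  by move=> xP xR /(arc_av x xP xR); rewrite !inE -!(eq_index _ xP).
have idx_uz x : x \in P -> x \in R -> index u R <= index x R <= index z R ->
    (index x P == index u P) || (index x P == index z P).
  by move=> xP xR /(arc_uz x xP xR); rewrite !inE -!(eq_index _ xP).
move: (ltnW au) (ltnW uv) (ltnW vz) (ltnW av) (ltnW uz) => le_au le_uv le_vz le_av le_uz.
exists a, u, v, z, (subpath P a u), (subpath R a v), (subpath P u v),
  (subpath R u z), (subpath P v z).
split.
- rewrite /= !inE -!(eq_index _ aP) -!(eq_index _ uP) -!(eq_index _ vP).
  by clear -au uv vz; lia.
- by split; apply: subpath_spath.
(* A vertex shared by two of the five paths lies on P (the two R-arcs are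
   disjoint since v precedes u on R), and a vertex of an R-arc on P is an
   endpoint of that arc: each case is a comparison of positions on P. *)
all: repeat split; move=> w; rewrite !mem_subpath // => /andP[w1 b1] /andP[w2 b2].
all: first [have wP : w \in P by [apply: w1 | apply: w2]
           | by exfalso; clear -b1 b2 vu; lia].
all: rewrite !inE -!(eq_index _ wP).
all: try move: (idx_av w wP w1 b1); try move: (idx_av w wP w2 b2).
all: try move: (idx_uz w wP w1 b1); try move: (idx_uz w wP w2 b2).
all: by clear -b1 b2 au uv vz; lia.
Qed.

Lemma path_del_edge a b x0 x p : path e x p -> ~~ path (del_edge e a b) x p ->
  exists2 i, i < size p & (nth x0 (x :: p) i == a) && (nth x0 p i == b).
Proof.
elim: p x => [|y p IHp] x //= /andP[exy Sp].
rewrite {1}/del_edge exy /=.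
case: (boolP ((x == a) && (y == b))) => [ab _ | _ /= nSp]; first by exists 0.
by have [i ip iE] := IHp y Sp nSp; exists i.+1.
Qed.
End Subpath.

Section Crossing.
Variables (V : finType) (e : rel V) (s t : V) (p r : seq V).
Hypotheses (Pp : PathA e s t p) (Pr : PathA e s t r).
Local Notation P := (s :: p).
Local Notation R := (s :: r).
Local Notation iP x := (index x P).
Local Notation iR x := (index x R).

Definition common x := (x \in P) && (x \in R).

Definition inverted y := common y && [exists x, [&& common x, iP x < iP y & iR y < iR x]].

Lemma common_source : common s.
Proof. by rewrite /common !mem_head. Qed.

Lemma index_sink w : PathA e s t w -> index t (s :: w) = size w.
Proof. by case/and3P=> _ /eqP <- Uw; rewrite index_last. Qed.

Lemma common_sink : common t.
Proof.
by rewrite /common -!index_mem (index_sink Pp) (index_sink Pr) !ltnSn.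
Qed.

Lemma index_common_sink x : common x -> (iP x <= iP t) && (iR x <= iR t).
Proof.
case/andP=> xP xR; rewrite (index_sink Pp) (index_sink Pr).
by rewrite -[_ <= size p]ltnS -[_ <= size r]ltnS !index_mem xP xR.
Qed.

Lemma eq_index_common x y : common x -> (iP x == iP y) = (iR x == iR y).
Proof. by case/andP=> xP xR; rewrite !eq_index. Qed.

Definition crossing_config a x y :=
  [/\ common a, common x & common y] /\
  [/\ iP a < iP x < iP y, iR a < iR y < iR x,
      forall w, common w -> iR a <= iR w <= iR y -> w \in [:: a; y]
    & forall w, common w -> iP w < iP a -> iR w < iR a].

Lemma inversion_crossing_config x0 y0 : common x0 -> common y0 ->
  iP x0 < iP y0 -> iR y0 < iR x0 -> exists a x y, crossing_config a x y.
Proof.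
(* y is R-first among the common vertices y' for which some common x comes
   before y' on P but after y' on R; a is the last common vertex before y
   on R. *)
move=> cx0 cy0 x0y0 y0x0.
have inv_y0 : inverted y0.
  by rewrite /inverted cy0; apply/existsP; exists x0; rewrite cx0 x0y0 y0x0.
case: (arg_minnP (fun z => iR z) inv_y0).
move=> y /andP[cy /existsP[x /and3P[cx xy yx]]] miny.
have first_inv z w : common z -> common w -> iP w < iP z -> iR z < iR w -> iR y <= iR z.
  move=> cz cw wz zw; apply: miny; rewrite /inverted cz.
  by apply/existsP; exists w; rewrite cw wz zw.
have sy : iR s < iR y.
  by move: (eq_index_common y common_source); rewrite !index_head; clear -xy; lia.
case: (@arg_maxnP _ s (fun z => common z && (iR z < iR y)) (fun z => iR z)).
  by rewrite common_source.
move=> a /andP[ca ay] maxa.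
have ay_P : iP a < iP y.
  case: (ltngtP (iP a) (iP y)) => // [ya | E].
  - by move: (first_inv a y ca cy ya ay); rewrite leqNgt ay.
  - by move: (eq_index_common y ca); rewrite E eqxx (ltn_eqF ay).
have ax_P : iP a < iP x.
  case: (ltngtP (iP a) (iP x)) => // [xa | E].
  - by move: (first_inv a x ca cx xa (ltn_trans ay yx)); rewrite leqNgt ay.
  - by move: (eq_index_common x ca); rewrite E eqxx (ltn_eqF (ltn_trans ay yx)).
exists a, x, y; split => //; split; first by rewrite ax_P.
- by rewrite ay.
- move=> w cw /andP[aw wy]; have /andP[_ wR] := cw.
  have wa : iR w < iR y -> iR w <= iR a by move=> wy'; apply: maxa; rewrite cw.
  by rewrite !inE -!(eq_index _ wR); clear -aw wy wa; lia.
- move=> w cw wa; case: (ltngtP (iR w) (iR a)) => // [aw | E].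
  + by move: (first_inv a w ca cw wa aw); rewrite leqNgt ay.
  + by move: (eq_index_common w ca); rewrite E eqxx (gtn_eqF wa).
Qed.

Lemma crossing_config_wheatstone a x y : crossing_config a x y -> has_Wheatstone e.
Proof.
(* u is R-last among the common vertices strictly between a and y on P, and
   z is the next common vertex after u on R: P visits a, u, y, z and R visits
   a, y, u, z. *)
move=> [[ca cx cy] [/andP[ax xy] /andP[ay yx] arc_ay a_first]].
case: (@arg_maxnP _ x (fun w => common w && (iP a < iP w < iP y)) (fun w => iR w)).
  by rewrite cx ax xy.
move=> u /andP[cu /andP[au uy]] maxu.
have yu : iR y < iR u by apply: leq_trans yx (maxu x _); rewrite cx ax xy.
have ut : iR u < iR t.
  move: (index_common_sink cu) (index_common_sink cy) (eq_index_common t cu).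
  by clear -uy; lia.
case: (@arg_minnP _ t (fun w => common w && (iR u < iR w)) (fun w => iR w)).
  by rewrite common_sink ut.
move=> z /andP[cz uz] minz.
have yz : iP y < iP z.
  have zu : iP a < iP z < iP y -> iR z <= iR u by move=> azy; apply: maxu; rewrite cz azy.
  move: (a_first z cz) (eq_index_common z ca) (eq_index_common z cy) zu.
  by clear -ay yu uz; lia.
case/and3P: Pp => SP _ UP; case/and3P: Pr => SR _ UR; case/andP: (cz) => zP zR.
apply: (@wheatstone_of_paths _ _ P R a u y z SP SR UP UR zP zR au uy yz ay yu uz).
  by move=> w wP wR; apply: arc_ay; rewrite /common wP wR.
move=> w wP wR /andP[uw wz]; have cw : common w by rewrite /common wP wR.
have zw : iR u < iR w -> iR z <= iR w by move=> uw'; apply: minz; rewrite cw.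
by rewrite !inE -!(eq_index _ wR); clear -uw wz zw; lia.
Qed.

Lemma crossing_wheatstone x y : common x -> common y ->
  iP x < iP y -> iR y < iR x -> has_Wheatstone e.
Proof.
move=> cx cy xy yx.
have [a [x' [y' conf]]] := inversion_crossing_config cx cy xy yx.
exact: crossing_config_wheatstone conf.
Qed.
End Crossing.

Section Precedence.
Variables (V : finType) (e : rel V) (s t : V).
Hypothesis noW : ~ has_Wheatstone e.

Definition precedes x y :=
  exists2 p, PathA e s t p & (y \in s :: p) && (index x (s :: p) < index y (s :: p)).

Lemma precedes_irrefl x : ~ precedes x x.
Proof. by case=> p _ /andP[_]; rewrite ltnn. Qed.

Lemma precedes_trans x y z : precedes x y -> precedes y z -> precedes x z.
Proof.
case=> p Pp /andP[yP xy] [q Pq /andP[zQ yz]].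
have yQ : y \in s :: q := index_ltn_mem yz.
move: Pp xy; case/splitPl: p / yP => p1 p2 Ey Pp xy.
move: Pq zQ yz; case/splitPl: q / yQ => q1 q2 Ey' Pq zQ yz.
have [/and3P[Sp _ Up] /and3P[Sq Lq Uq]] := conj Pp Pq.
have x1 : x \in s :: p1 by rewrite -(index_le_last _ Up) Ey ltnW.
have z1 : z \notin s :: q1 by rewrite -(index_le_last _ Uq) Ey' -ltnNge.
have z2 : z \in q2 by move: zQ; rewrite -cat_cons mem_cat (negbTE z1).
have y1 : y \in s :: q1 by rewrite -Ey' mem_last.
have q2_q1 : {in q2, forall w, w \notin s :: q1}.
  by move: Uq; rewrite -cat_cons cat_uniq => /and3P[_ /hasPn].
have q2_p1 : {in q2, forall w, w \notin s :: p1}.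
  (* such a w comes before y on the first path and after y on the second *)
  move=> w w2; apply/negP => w1; apply: noW.
  have wy : w != y by apply: contraNneq (q2_q1 w w2) => ->.
  have wP : w \in s :: p1 ++ p2 by rewrite -cat_cons mem_cat w1.
  apply: (crossing_wheatstone Pp Pq (x := w) (y := y)).
  - by rewrite /common wP -cat_cons mem_cat w2 orbT.
  - by rewrite /common -!cat_cons !mem_cat y1 -Ey mem_last.
  - by rewrite ltn_neqAle (eq_index _ wP) wy -Ey (index_le_last _ Up).
  - by rewrite ltnNge -Ey' (index_le_last _ Uq) q2_q1.
have Uw : uniq (s :: p1 ++ q2).
  move: Up Uq; rewrite -!cat_cons !cat_uniq => /and3P[-> _ _] /and3P[_ _ ->].
  by rewrite andbT; apply/hasPn.
exists (p1 ++ q2).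
  apply/and3P; split => //.
  - by move: Sp Sq; rewrite !cat_path Ey Ey' => /andP[-> _] /andP[_ ->].
  - by rewrite last_cat Ey -Ey' -last_cat.
rewrite -cat_cons mem_cat z2 orbT /=.
apply: (leq_ltn_trans (_ : _ <= index y (s :: p1 ++ q2))).
  by rewrite -Ey (index_le_last _ Uw).
by rewrite ltnNge -Ey (index_le_last _ Uw) q2_p1.
Qed.

Lemma PathA_del_edge a b : ~ precedes a b -> PathA (del_edge e a b) s t =1 PathA e s t.
Proof.
move=> nab p; apply/idP/idP => /and3P[Sp Lp Up]; apply/and3P; split => //.
  by apply: sub_path Sp => x y /andP[].
apply/negPn/negP => /(path_del_edge s Sp) [i ip /andP[/eqP ia /eqP ib]]; apply: nab.
exists p; first exact/and3P.
have ip' : i < size (s :: p) := ltnW ip.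
by rewrite -ia -ib -[nth s p i]/(nth s (s :: p) i.+1) !index_uniq ?mem_nth ?ltnSn.
Qed.
End Precedence.

Theorem lemma3 (V : finType) (e : rel V) (s t : V) (c : seq V) :
  st_graph e s t -> ~ has_Wheatstone e -> simple_cycle e c ->
  exists2 a : V, a \in c &
    forall p : seq V, PathA (del_edge e a (next c a)) s t p = PathA e s t p.
Proof.
move=> _ noW /and3P[c0 Uc _]; apply: NNPP => no_del.
have [a ac] : exists a, a \in c.
  by case: c c0 {Uc no_del} => // a c _; exists a; rewrite mem_head.
apply: (@precedes_irrefl V e s t a).
apply: (trans_next_refl (precedes_trans noW) Uc _ ac) => x xc.
by apply: NNPP => nx; apply: no_del; exists x => //; apply: PathA_del_edge.
Qed.
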